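(* Let $V$ be a real vector space of dimension $n$, $L\subset V$ a lattice of rank $n$, $P$ an $n$-dimensional convex polytope with vertices in $L$, and $E(t)$ its Ehrhart polynomial. Let $p$ be a prime and $1\le k\le n-1$. Then \[ T(p,k)E(t)=G_{k-1,n-1}E(pt)+(G_{k,n}-G_{k-1,n-1})E(t). \] In particular, for every $0\le l\le n$, \[ c_l(T(p,k)E)=\bigl(G_{k,n}+(p^l-1)G_{k-1,n-1}\bigr)c_l(E). \]
   Context: The Ehrhart polynomial of a polytope $Q$ with vertices in a lattice $N$ is the polynomial $E_N(Q)(t)=\#(tQ\cap N)$, $t\in\mathbb{Z}_{\ge0}$; $E=E_L(P)$. $c_l(f)$ is the coefficient of $t^l$ in $f\in\mathbb{Q}[t]$. $\mathscr{L}_k$ is the set of lattices $M$ with $L\subsetneq M\subsetneq p^{-1}L$ and $\dim_{\mathbb{F}_p}(M/L)=k$, and $T(p,k)E=\sum_{M\in\mathscr{L}_k}E_M(P)$. $G_{a,b}$ is the number of $a$-dimensional subspaces of $\mathbb{F}_p^b$, i.e. $G_{a,b}=\frac{[b]!}{[a]![b-a]!}$ with $[m]=(p^m-1)/(p-1)$ and $[m]!=\prod_{i=1}^m[i]$. *)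

From HB Require Import structures.
From mathcomp Require Import all_boot all_order all_algebra.
From mathcomp Require Import boolp classical_sets fsbigop reals.
Set Implicit Arguments. Unset Strict Implicit. Unset Printing Implicit Defensive.
Import Order.TTheory GRing.Theory Num.Theory.
Local Open Scope classical_set_scope.
Local Open Scope ring_scope.

Definition lattice_of (R : realType) (n : nat) (B : 'M[R]_n) : set 'rV[R]_n :=
  [set x | exists z : 'rV[int]_n, x = map_mx (fun a : int => a%:~R) z *m B].

Definition is_lattice (R : realType) (n : nat) (M : set 'rV[R]_n) : Prop :=
  exists B : 'M[R]_n, B \in unitmx /\ M = lattice_of B.

Definition lat_div (R : realType) (n : nat) (p : nat) (L : set 'rV[R]_n)
  : set 'rV[R]_n := [set x | L (p%:R *: x)].

(* dim_{F_p}(M/L) = k, for L ⊆ M ⊆ p^{-1}L (so M/L is an F_p-vector space):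
   there are x_1..x_k in M whose classes form an F_p-basis of M/L, i.e. every
   m in M is congruent mod L to  sum_i a_i x_i  for a unique a in F_p^k
   (elements of F_p represented by 0..p-1). *)
Definition quot_dim (R : realType) (n : nat) (p : nat) (M L : set 'rV[R]_n)
  (k : nat) : Prop :=
  exists x : 'I_k -> 'rV[R]_n, (forall i, M (x i)) /\
    forall m, M m ->
      exists! a : {ffun 'I_k -> 'I_p},
        L (m - \sum_(i < k) ((a i : nat)%:R *: x i)).

Definition Lk (R : realType) (n : nat) (p k : nat) (L : set 'rV[R]_n)
  : set (set 'rV[R]_n) :=
  [set M | [/\ is_lattice M, L `<` M, M `<` lat_div p L & quot_dim p M L k]].

Definition conv (R : realType) (n : nat) (vs : seq 'rV[R]_n) : set 'rV[R]_n :=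
  [set x | exists w : 'I_(size vs) -> R,
     [/\ forall i, 0 <= w i, \sum_i w i = 1 &
         x = \sum_i w i *: nth 0 vs i]].

Definition dilate (R : realType) (n : nat) (t : nat) (Q : set 'rV[R]_n)
  : set 'rV[R]_n := [set t%:R *: x | x in Q].

Definition is_ehrhart (R : realType) (n : nat) (N Q : set 'rV[R]_n)
  (f : {poly R}) : Prop :=
  forall t : nat, exists s : seq 'rV[R]_n,
    [/\ uniq s, forall x, x \in s <-> (dilate t Q `&` N) x
      & f.[t%:R] = (size s)%:R].

(* q-integers at q = p: [m] = (p^m-1)/(p-1) = sum_{i<m} p^i, [m]! *)
Definition qint (p m : nat) : nat := \sum_(i < m) p ^ i.
Definition qfact (p m : nat) : nat := \prod_(1 <= i < m.+1) qint p i.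
(* G_{a,b} = [b]! / ([a]! [b-a]!)  (number of a-dim subspaces of F_p^b) *)
Definition gauss_binom (p a b : nat) : nat :=
  (qfact p b %/ (qfact p a * qfact p (b - a)))%N.

From HB Require Import structures.
From mathcomp Require Import all_boot all_order all_algebra zify.
From mathcomp Require Import boolp classical_sets fsbigop reals.
From mathcomp.algebra_tactics Require Import ring.
Set Implicit Arguments. Unset Strict Implicit. Unset Printing Implicit Defensive.
Import Order.TTheory GRing.Theory Num.Theory.

(* The lattices between L and p^-1 L are the preimages
   sublat W of the subspaces W of p^-1 L / L = F_p^n, and sublat W lies in
   L_k exactly when dim W = k.  A point of p^-1 L therefore lies in G_{k,n}
   lattices of L_k if it is in L (every k-subspace contains 0), and in
   G_{k-1,n-1} of them otherwise (the k-subspaces through a given line).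
   Summing point counts over L_k gives, for every t,
     sum_M E_M(t) = G_{k-1,n-1} #(tP cap p^-1 L) + (G_{k,n} - G_{k-1,n-1}) E(t),
   and #(tP cap p^-1 L) = E(pt); polynomials agreeing on all of N are equal.
   The Gaussian binomials arise by double counting ordered families of
   independent vectors. *)

Section GaussBinom.
Variable q : nat.

Lemma qint_gt0 i : (0 < i)%N -> (0 < qint q i)%N.
Proof. by case: i => // i _; rewrite /qint big_ord_recl expn0 add1n. Qed.

Lemma qfact_gt0 m : (0 < qfact q m)%N.
Proof.
rewrite /qfact big_seq; elim/big_ind: _ => // [x y|i]; first by rewrite muln_gt0 => ->.
by rewrite mem_index_iota => /andP[i_gt0 _]; apply: qint_gt0.
Qed.

Lemma qfact_split m k : (k <= m)%N ->
  qfact q m = (\prod_(i < k) qint q (m - i) * qfact q (m - k))%N.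
Proof.
elim: k => [|k IHk] le_km; first by rewrite big_ord0 mul1n subn0.
rewrite (IHk (ltnW le_km)) big_ord_recr /= -mulnA; congr (_ * _)%N.
have -> : (m - k = (m - k.+1).+1)%N by lia.
by rewrite /qfact big_nat_recr // mulnC.
Qed.

Lemma subn_expn_qint a i : (0 < q)%N -> (i <= a)%N ->
  (q ^ a - q ^ i = q ^ i * q.-1 * qint q (a - i))%N.
Proof.
move=> q_gt0 le_ia.
by rewrite -mulnA /qint -predn_exp -subn1 mulnBr muln1 -expnD subnKC.
Qed.

Lemma gauss_binom_char k m N : (1 < q)%N -> (k <= m)%N ->
  (N * \prod_(i < k) (q ^ k - q ^ i))%N = (\prod_(i < k) (q ^ m - q ^ i))%N ->
  N = gauss_binom q k m.
Proof.
move=> q_gt1 le_km; have q_gt0 : (0 < q)%N by apply: ltnW.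
have prod_sub a : (k <= a)%N -> (\prod_(i < k) (q ^ a - q ^ i) =
    \prod_(i < k) (q ^ i * q.-1) * \prod_(i < k) qint q (a - i))%N.
  move=> le_ka; rewrite -big_split /=; apply: eq_bigr => i _.
  by rewrite subn_expn_qint // (leq_trans (ltnW (ltn_ord i))).
have pos : (0 < \prod_(i < k) (q ^ i * q.-1))%N.
  have q1_gt0 : (0 < q.-1)%N by rewrite -ltnS prednK.
  by rewrite prodn_gt0 // => i; rewrite muln_gt0 expn_gt0 q_gt0.
have qfactk : (\prod_(i < k) qint q (k - i) = qfact q k)%N.
  by rewrite (qfact_split (leqnn k)) subnn /qfact big_geq // muln1.
rewrite !prod_sub // qfactk mulnCA => /eqP; rewrite eqn_pmul2l // => /eqP eN.
rewrite /gauss_binom (qfact_split le_km) -eN -mulnA mulnK //.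
by rewrite muln_gt0 !qfact_gt0.
Qed.

End GaussBinom.

Local Open Scope ring_scope.

Section MxRank.
Variable F : fieldType.

Lemma mxrank_adds_row m n (S : 'M[F]_(m, n)) (v : 'rV_n) :
  \rank (S + v)%MS = (\rank S + ~~ (v <= S)%MS)%N.
Proof.
have [vS|vNS] := boolP (v <= S)%MS; first by rewrite (addsmx_idPl vS) addn0.
apply/anti_leq/andP; split.
  have [le _] := mxrank_adds_leqif S v.
  by apply: leq_trans le _; rewrite leq_add2l rank_leq_row.
rewrite addn1; apply: rank_ltmx; rewrite ltmxEneq addsmxSl /=.
by apply: contra vNS => SvS; exact: submx_trans (addsmxSr _ _) SvS.
Qed.

Lemma mxrank_adds_col_mx m n k (A : 'M[F]_(m, n)) (v : 'rV_n) (B : 'M_(k, n)) :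
  \rank (A + col_mx v B)%MS = (\rank (A + B)%MS + ~~ (v <= A + B)%MS)%N.
Proof.
have -> : (A + col_mx v B :=: (A + B) + v)%MS.
  apply: eqmx_trans (adds_eqmx (eqmx_refl A) (eqmx_sym (addsmxE v B))) _.
  by rewrite addsmxA [(A + v)%MS]addsmxC -addsmxA addsmxC.
exact: mxrank_adds_row.
Qed.

Lemma mxrank_adds_col_mx_full m n k (A : 'M[F]_(m, n)) (v : 'rV_n) (B : 'M_(k, n)) :
  (\rank (A + col_mx v B)%MS == \rank A + k.+1)%N =
  (\rank (A + B)%MS == \rank A + k)%N && ~~ (v <= A + B)%MS.
Proof.
have le : (\rank (A + B)%MS <= \rank A + k)%N.
  have [leAB _] := mxrank_adds_leqif A B.
  by apply: leq_trans leAB _; rewrite leq_add2l rank_leq_row.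
by rewrite mxrank_adds_col_mx; case: (v <= _)%MS => /=; lia.
Qed.

Lemma pivot_basis n k (W : 'M[F]_n) : \rank W = k ->
  exists (A : 'M[F]_(k, n)) (f : 'I_k -> 'I_n),
    [/\ injective f, (A == W)%MS & forall i i', A i (f i') = (i == i')%:R].
Proof.
move=> <-; set A1 := row_base W.
have rf : row_full A1^T by rewrite /row_full mxrank_tr eq_row_base.
set f := fullrankfun rf; set C := rowsub f A1^T.
have Cu : C^T \in unitmx by rewrite unitmx_tr fullrowsub_unit.
exists (invmx C^T *m A1), f; split.
- exact: fullrankfun_inj.
- apply/eqmxP; apply: eqmx_trans (eq_row_base W); apply/eqmxP/eqmxMunitP.
  by exists (invmx C^T); rewrite ?unitmx_inv.
- have e : colsub f A1 = C^T by apply/matrixP => i j; rewrite !mxE.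
  move=> i i'; have := congr1 (fun M : 'M[F]_(\rank W) => M i i') (mulVmx Cu).
  by rewrite -e mulmx_colsub !mxE.
Qed.

End MxRank.

Section SubspaceCount.
Variable F : finFieldType.
Local Notation q := #|F|.

Lemma card_submx m n (A : 'M[F]_(m, n)) :
  #|[set v : 'rV_n | (v <= A)%MS]| = (q ^ \rank A)%N.
Proof.
have -> : [set v : 'rV_n | (v <= A)%MS] =
    [set u *m row_base A | u in [set: 'rV_(\rank A)]].
  apply/setP => v; rewrite !inE; apply/idP/imsetP.
    by rewrite -(eq_row_base A) => /submxP[u ->]; exists u; rewrite ?inE.
  by move=> [u _ ->]; apply: submx_trans (submxMl _ _) _; rewrite eq_row_base.
rewrite card_imset; last first.
  have [B HB] := row_freeP (row_base_free A).
  by apply: (can_inj (g := mulmx^~ B)) => u; rewrite -mulmxA HB mulmx1.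
by rewrite cardsT card_mx mul1n.
Qed.

Lemma card_submx_notin m m' n (W : 'M[F]_(m, n)) (S : 'M[F]_(m', n)) :
  (S <= W)%MS ->
  #|[set v : 'rV_n | (v <= W)%MS && ~~ (v <= S)%MS]| = (q ^ \rank W - q ^ \rank S)%N.
Proof.
move=> SW; rewrite -!card_submx -cardsDS; last first.
  by apply/fintype.subsetP => v; rewrite !inE => /submx_trans; apply.
by congr #|pred_of_set _|; apply/setP => v; rewrite !inE andbC.
Qed.

Definition free_ext m' n (W : 'M[F]_n) (A : 'M[F]_(m', n)) m :=
  [set B : 'M[F]_(m, n) | (B <= W)%MS && (\rank (A + B)%MS == \rank A + m)%N].

Lemma free_ext_col_mx m' n (W : 'M[F]_n) (A : 'M[F]_(m', n)) m
    (v : 'rV_n) (B : 'M_(m, n)) :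
  (col_mx v B \in free_ext W A (1 + m)) =
  [&& B \in free_ext W A m, (v <= W)%MS & ~~ (v <= A + B)%MS].
Proof.
rewrite !inE col_mx_sub mxrank_adds_col_mx_full.
by case: (v <= W)%MS; case: (B <= W)%MS; rewrite /= ?andbF.
Qed.

Lemma card_free_ext m' n (W : 'M[F]_n) (A : 'M[F]_(m', n)) m :
  (A <= W)%MS -> (\rank A + m <= \rank W)%N ->
  #|free_ext W A m| = (\prod_(i < m) (q ^ \rank W - q ^ (\rank A + i)))%N.
Proof.
(* The first row of a family must lie in [W] but outside the span of [A] and
   the remaining rows. *)
move=> AW; elim: m => [_|m IHm le_mW].
  rewrite big_ord0 (@eq_card1 _ (0 : 'M_(0, n))) // => B.
  by rewrite !inE [B]flatmx0 eqxx sub0mx addsmx0 addn0 eqxx.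
rewrite big_ord_recr /= -IHm; last by apply: leq_trans le_mW; rewrite leq_add2l.
rewrite -[LHS]sum1_card (partition_big (fun B : 'M_(1 + m, n) => dsubmx B)
  (mem (free_ext W A m))) /=; last first.
  by move=> B; rewrite -[B]vsubmxK free_ext_col_mx col_mxKd => /andP[].
rewrite -sum_nat_const; apply: eq_bigr => B extB.
rewrite (reindex (fun v : 'rV_n => col_mx v B)) /=; last first.
  exists usubmx => [v _|C]; first by rewrite col_mxKu.
  by rewrite inE => /andP[_ /eqP <-]; rewrite vsubmxK.
have /andP[BW /eqP rkAB] : (B <= W)%MS && (\rank (A + B)%MS == \rank A + m)%N.
  by rewrite inE in extB.
rewrite -rkAB -(card_submx_notin (S := (A + B)%MS)) ?addsmx_sub ?AW // -sum1_card.
by apply: eq_bigl => v; rewrite free_ext_col_mx col_mxKd eqxx extB !inE andbT.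
Qed.

(* A subspace is represented by its canonical square generator [<<W>>]. *)
Definition subspaces_through n (v : 'rV[F]_n) k :=
  [set W : 'M[F]_n | [&& <<W>>%MS == W, \rank W == k & (v <= W)%MS]].

Lemma card_subspaces_through_mul n (v : 'rV[F]_n) m : (\rank v + m <= n)%N ->
  (#|subspaces_through v (\rank v + m)| *
    \prod_(i < m) (q ^ (\rank v + m) - q ^ (\rank v + i)))%N =
  (\prod_(i < m) (q ^ n - q ^ (\rank v + i)))%N.
Proof.
(* Each family counted by [free_ext 1%:M v m] spans, together with [v], one
   subspace through [v], and each such subspace is spanned by equally many. *)
move=> le_mn; have := card_free_ext (submx1 v) (m := m).
rewrite mxrank1 => /(_ le_mn) <-.
rewrite -[RHS]sum1_card (partition_big (fun B : 'M_(m, n) => <<(v + B)%MS>>%MS)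
  (mem (subspaces_through v (\rank v + m)))) /=; last first.
  move=> B; rewrite !inE genmx_id mxrank_gen eqxx /= => /andP[_ ->] /=.
  by rewrite genmxE addsmxSl.
rewrite -sum_nat_const; apply: eq_bigr => W /[!inE] /and3P[/eqP gW /eqP rW vW].
have := card_free_ext vW (m := m); rewrite rW => /(_ (leqnn _)) <-.
rewrite -[LHS]sum1_card; apply: eq_bigl => B; rewrite !inE submx1 /=.
apply/idP/idP.
  move=> /andP[BW /eqP rk]; rewrite rk eqxx /=; apply/eqP; rewrite -gW; apply/genmxP.
  have sub : (v + B <= W)%MS by rewrite addsmx_sub vW BW.
  by rewrite sub /= -(mxrank_leqif_sup sub) rk rW.
by move=> /andP[/eqP rk /eqP <-]; rewrite genmxE addsmxSr rk eqxx.
Qed.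

Lemma prod_subn_expnS a m :
  (\prod_(i < m) (q ^ a.+1 - q ^ i.+1) = q ^ m * \prod_(i < m) (q ^ a - q ^ i))%N.
Proof.
have -> : (q ^ m = \prod_(i < m) q)%N by rewrite prod_nat_const card_ord.
rewrite -big_split /=.
by apply: eq_bigr => i _; rewrite !expnS mulnBr.
Qed.

Lemma card_subspaces n k : (k <= n)%N ->
  #|subspaces_through (0 : 'rV[F]_n) k| = gauss_binom q k n.
Proof.
move=> le_kn; apply: gauss_binom_char => //; first exact: card_finNzRing_gt1.
by have := @card_subspaces_through_mul n 0 k; rewrite mxrank0 /= !add0n; apply.
Qed.

Lemma card_subspaces_through n k (v : 'rV[F]_n) : v != 0 -> (1 <= k <= n)%N ->
  #|subspaces_through v k| = gauss_binom q k.-1 n.-1.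
Proof.
move=> v0 /andP[k_gt0 le_kn]; have n_gt0 : (0 < n)%N by apply: leq_trans le_kn.
apply: gauss_binom_char; [exact: card_finNzRing_gt1 | lia |].
have := @card_subspaces_through_mul n v k.-1; rewrite rank_rV v0 add1n prednK //.
move=> /(_ le_kn); rewrite -[in (q ^ n)%N](prednK n_gt0) -[in (q ^ k)%N](prednK k_gt0).
under eq_bigr do rewrite add1n.
under [in RHS]eq_bigr do rewrite add1n.
rewrite !prod_subn_expnS mulnCA => /eqP; rewrite eqn_pmul2l ?expn_gt0 => [/eqP //|].
by rewrite (ltnW (card_finNzRing_gt1 F)).
Qed.

Lemma card_subspaces_sub n k (v : 'rV[F]_n) : (1 <= k <= n)%N ->
  #|[set W in subspaces_through 0 k | (v <= W)%MS]| =
  if v == 0 then gauss_binom q k n else gauss_binom q k.-1 n.-1.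
Proof.
move=> k_range; have -> : [set W in subspaces_through 0 k | (v <= W)%MS] =
    subspaces_through v k.
  by apply/setP => W; rewrite !inE sub0mx andbT andbA.
have [->|v0] := eqVneq v 0; last exact: card_subspaces_through.
by apply: card_subspaces; case/andP: k_range.
Qed.

Definition set_mx n (S : {set 'rV[F]_n}) : 'M[F]_(#|S|, n) := \matrix_i enum_val i.

Lemma submx_set_mx n (S : {set 'rV[F]_n}) v :
  0 \in S -> {in S &, forall u w, u + w \in S} -> (forall c, {in S, forall u, c *: u \in S}) ->
  (v <= set_mx S)%MS = (v \in S).
Proof.
move=> S0 SD SZ; apply/idP/idP => [/submxP[u ->]|vS]; last first.
  by have := row_sub (enum_rank_in vS v) (set_mx S); rewrite rowK enum_rankK_in.
rewrite mulmx_sum_row; elim/big_ind: _ => [|u1 u2|i _]; [exact: S0 | exact: SD |].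
by rewrite rowK; apply: SZ; exact: enum_valP.
Qed.

End SubspaceCount.

Section LatticeOf.
Variables (R : realType) (n : nat) (B : 'M[R]_n).

Lemma lattice_of0 : lattice_of B 0.
Proof. by exists 0; rewrite map_mx0 mul0mx. Qed.

Lemma lattice_ofD x y : lattice_of B x -> lattice_of B y -> lattice_of B (x + y).
Proof. by move=> [z1 ->] [z2 ->]; exists (z1 + z2); rewrite map_mxD mulmxDl. Qed.

Lemma lattice_of_sum (I : finType) (g : I -> 'rV[R]_n) :
  (forall i, lattice_of B (g i)) -> lattice_of B (\sum_i g i).
Proof. by move=> Lg; elim/big_ind: _ => //; [exact: lattice_of0 | exact: lattice_ofD]. Qed.

Lemma lattice_ofMn x m : lattice_of B x -> lattice_of B (x *+ m).
Proof.
move=> Lx; elim: m => [|m IHm]; first by rewrite mulr0n; exact: lattice_of0.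
by rewrite mulrS; apply: lattice_ofD.
Qed.

End LatticeOf.

Section DivpLattice.
Variables (R : realType) (n p : nat) (B0 : 'M[R]_n).
Hypotheses (p_pr : prime p) (B0_unit : B0 \in unitmx).
Local Notation L := (lattice_of B0).

Definition divp_pt (z : 'rV[int]_n) : 'rV[R]_n :=
  p%:R^-1 *: (map_mx (fun a : int => a%:~R) z *m B0).

Definition redp (z : 'rV[int]_n) : 'rV['F_p]_n := map_mx (fun a : int => a%:~R) z.

Fact divp_pt_is_zmod_morphism : zmod_morphism divp_pt.
Proof. by move=> z1 z2; rewrite /divp_pt map_mxB mulmxBl scalerBr. Qed.

HB.instance Definition _ := GRing.isZmodMorphism.Build _ _ divp_pt
  divp_pt_is_zmod_morphism.

Fact redp_is_zmod_morphism : zmod_morphism redp.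
Proof. by move=> z1 z2; rewrite /redp map_mxB. Qed.

HB.instance Definition _ := GRing.isZmodMorphism.Build _ _ redp
  redp_is_zmod_morphism.

Lemma pnatr_neq0 : (p%:R : R) != 0.
Proof. by rewrite pnatr_eq0 -lt0n prime_gt0. Qed.

Lemma divp_ptMp z : divp_pt (z *+ p) = map_mx (fun a : int => a%:~R) z *m B0.
Proof.
by rewrite raddfMn -scaler_nat /divp_pt scalerA divff ?pnatr_neq0 // scale1r.
Qed.

Lemma divp_pt_inj : injective divp_pt.
Proof.
move=> z1 z2; rewrite /divp_pt => /(congr1 (fun x => p%:R *: x)).
rewrite !scalerA divff ?pnatr_neq0 // !scale1r => /(congr1 (mulmx^~ (invmx B0))).
rewrite -!mulmxA mulmxV // !mulmx1 => /rowP e; apply/rowP => j.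
by have /eqP := e j; rewrite !mxE eqr_int => /eqP.
Qed.

Lemma lat_divP x : lat_div p L x <-> exists z, x = divp_pt z.
Proof.
rewrite /lat_div /lattice_of /=; split=> [[z e]|[z ->]]; exists z.
  by rewrite /divp_pt -e scalerA mulVf ?pnatr_neq0 // scale1r.
by rewrite /divp_pt scalerA divff ?pnatr_neq0 // scale1r.
Qed.

Lemma lattice_divp_ptP z : L (divp_pt z) <-> redp z = 0.
Proof.
split=> [[y e]|e].
  have -> : z = y *+ p by apply: divp_pt_inj; rewrite divp_ptMp.
  apply/rowP => j; rewrite !mxE mulmxnE rmorphMn /= -mulr_natr.
  by rewrite (pchar_Fp_0 p_pr) mulr0.
have dvd_p j : (p %| z ord0 j)%Z.
  rewrite (dvdz_pcharf (pchar_Fp p_pr)).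
  by have := congr1 (fun v : 'rV['F_p]_n => v 0 j) e; rewrite !mxE => ->.
set y := map_mx (fun a => (a %/ p)%Z) z.
have -> : z = y *+ p by apply/rowP => j; rewrite mulmxnE mxE -mulr_natr natz divzK.
by rewrite divp_ptMp; exists y.
Qed.

Lemma latticeP x : L x -> exists2 z, x = divp_pt z & redp z = 0.
Proof.
move=> [y ->]; exists (y *+ p); first by rewrite divp_ptMp.
by apply/lattice_divp_ptP; rewrite divp_ptMp; exists y.
Qed.

Lemma lattice_sub_lat_div : (L `<=` lat_div p L)%classic.
Proof. by move=> x /latticeP[z -> _]; apply/lat_divP; exists z. Qed.

Definition lift_Fp (v : 'rV['F_p]_n) : 'rV[int]_n := map_mx (fun c : 'F_p => (c : nat)%:Z) v.

Lemma redp_lift_Fp v : redp (lift_Fp v) = v.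
Proof. by apply/rowP => j; rewrite !mxE -pmulrn natr_Zp. Qed.

Definition sublat (W : 'M['F_p]_n) : set 'rV[R]_n :=
  [set x | exists2 z, x = divp_pt z & (redp z <= W)%MS]%classic.

Lemma sublat_divp_ptP W z : sublat W (divp_pt z) <-> (redp z <= W)%MS.
Proof. by split=> [[z' /divp_pt_inj -> //]|]; exists z. Qed.

Lemma sublat_sub_lat_div W : (sublat W `<=` lat_div p L)%classic.
Proof. by move=> x [z -> _]; apply/lat_divP; exists z. Qed.

Section PivotBasis.
Variables (k : nat) (f : 'I_k -> 'I_n) (A : 'M['F_p]_(k, n)).
Hypotheses (f_inj : injective f) (A_piv : forall i i', A i (f i') = (i == i')%:R).

Definition pivots : {set 'I_n} := [set f i | i in 'I_k]%SET.

Definition pivot_of j := [pick i | f i == j].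

Lemma pivot_of_f i : pivot_of (f i) = Some i.
Proof.
rewrite /pivot_of; case: pickP => [i' /eqP /f_inj -> //|/(_ i)].
by rewrite eqxx.
Qed.

Lemma pivot_of_notin j : j \notin pivots -> pivot_of j = None.
Proof.
move=> jN; rewrite /pivot_of; case: pickP => // i /eqP fi.
by move: jN; rewrite -fi imset_f.
Qed.

(* Integer coordinates, relative to [p^-1 L], of a basis of [sublat W]: lifts
   of the rows of the pivoted basis [A] of [W], and [p e_j] for the non-pivot
   columns [j].  Up to permutation it is block triangular with diagonal blocks
   [1] and [p%:M], hence invertible. *)
Definition sublat_coords (T : nzRingType) : 'M[T]_n :=
  \matrix_(j, c) match pivot_of j with
                 | Some i => ((A i c : nat)%:R : T)
                 | None => (p * (j == c))%:R end.

Lemma pivot_val i i' : (A i (f i') : nat) = (i == i').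
Proof.
by rewrite A_piv val_Fp_nat // modn_small // (leq_ltn_trans (leq_b1 _)) ?prime_gt1.
Qed.

Lemma sublat_coords_pivot (T : nzRingType) (y : 'rV[T]_n) i :
  (y *m sublat_coords T) 0 (f i) = y 0 (f i).
Proof.
rewrite mxE (bigID (mem pivots)) /= big_imset /=; last by move=> ? ? _ _; apply: f_inj.
rewrite (bigD1 i) //= big1 => [|i' ne_i'i]; last first.
  by rewrite mxE pivot_of_f pivot_val (negPf ne_i'i) mulr0.
rewrite big1 => [|j jN]; last first.
  rewrite mxE pivot_of_notin //; case: eqP => [ej|]; last by rewrite muln0 mulr0.
  by move: jN; rewrite ej imset_f.
by rewrite mxE pivot_of_f pivot_val eqxx mulr1 !addr0.
Qed.

Lemma sublat_coords_npivot (T : nzRingType) (y : 'rV[T]_n) c : c \notin pivots ->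
  (y *m sublat_coords T) 0 c = \sum_i y 0 (f i) * (A i c : nat)%:R + y 0 c * p%:R.
Proof.
move=> cN; rewrite mxE (bigID (mem pivots)) /= big_imset /=; last first.
  by move=> ? ? _ _; apply: f_inj.
congr (_ + _); first by apply: eq_bigr => i _; rewrite mxE pivot_of_f.
rewrite (bigD1 c) //= big1 => [|j /andP[jN ne_jc]]; last first.
  by rewrite mxE pivot_of_notin // (negPf ne_jc) muln0 mulr0.
by rewrite mxE pivot_of_notin // eqxx muln1 addr0.
Qed.

Lemma map_sublat_coords (T : nzRingType) :
  map_mx (fun a : int => a%:~R) (sublat_coords int) = sublat_coords T.
Proof. by apply/matrixP => j c; rewrite !mxE; case: pivot_of => [i|]; exact: rmorph_nat. Qed.

Lemma sublat_coords_Fp_sub : (sublat_coords 'F_p <= A)%MS.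
Proof.
apply/row_subP => j; case e: (pivot_of j) => [i|].
  have -> : row j (sublat_coords 'F_p) = row i A.
    by apply/rowP => c; rewrite !mxE e natr_Zp.
  exact: row_sub.
have -> : row j (sublat_coords 'F_p) = 0.
  by apply/rowP => c; rewrite !mxE e natrM (pchar_Fp_0 p_pr) mul0r.
exact: sub0mx.
Qed.

Lemma redp_sub_pivotP z : (redp z <= A)%MS <-> exists y, z = y *m sublat_coords int.
Proof.
split=> [/submxP[u ez]|[y ->]]; last first.
  rewrite /redp map_mxM /= map_sublat_coords.
  exact: submx_trans (submxMl _ _) sublat_coords_Fp_sub.
have uf i : u 0 i = redp z 0 (f i).
  rewrite ez mxE (bigD1 i) //= A_piv eqxx mulr1 big1 ?addr0 // => i' ne_i'i.
  by rewrite A_piv (negPf ne_i'i) mulr0.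
pose d c := (z 0 c - \sum_i z 0 (f i) * (A i c : nat)%:R)%R.
have p_dvd_d c : (p %| d c)%Z.
  rewrite (dvdz_pcharf (pchar_Fp p_pr)) rmorphB rmorph_sum /=.
  under eq_bigr do rewrite rmorphM rmorph_nat /= natr_Zp.
  have := congr1 (fun v : 'rV['F_p]_n => v 0 c) ez; rewrite !mxE => ->.
  by rewrite subr_eq0; apply/eqP/eq_bigr => i _; rewrite uf mxE.
exists (\row_j match pivot_of j with Some _ => z 0 j | None => (d j %/ p)%Z end).
apply/rowP => c; have [/imsetP[i _ ->]|cN] := boolP (c \in pivots).
  by rewrite sublat_coords_pivot mxE pivot_of_f.
rewrite sublat_coords_npivot // mxE pivot_of_notin //.
under eq_bigr do rewrite mxE pivot_of_f.
by rewrite natz divzK // /d addrC subrK.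
Qed.

Lemma sublat_coords_unit : sublat_coords R \in unitmx.
Proof.
rewrite -row_free_unit -kermx_eq0; apply/eqP/row_matrixP => i; rewrite row0.
set y := row i _.
have yB : y *m sublat_coords R = 0 by apply/sub_kermxP; exact: row_sub.
have y_piv i0 : y 0 (f i0) = 0 by rewrite -(sublat_coords_pivot y) yB mxE.
apply/rowP => c; rewrite [RHS]mxE; have [/imsetP[i0 _ ->] | cN] := boolP (c \in pivots).
  exact: y_piv.
have := sublat_coords_npivot y cN; rewrite yB mxE big1 => [|i' _]; last first.
  by rewrite y_piv mul0r.
by rewrite add0r => /esym/eqP; rewrite mulf_eq0 (negPf pnatr_neq0) orbF => /eqP.
Qed.

Definition sublat_basis := p%:R^-1 *: (sublat_coords R *m B0).

Lemma sublat_basis_unit : sublat_basis \in unitmx.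
Proof.
rewrite unitmxZ ?unitfE ?invr_eq0 ?pnatr_neq0 //.
by rewrite unitmx_mul sublat_coords_unit B0_unit.
Qed.

Lemma mul_sublat_basis y :
  map_mx (fun a : int => a%:~R) y *m sublat_basis = divp_pt (y *m sublat_coords int).
Proof. by rewrite /divp_pt map_mxM map_sublat_coords /sublat_basis -scalemxAr mulmxA. Qed.

Lemma sublat_is_lattice W : (A == W)%MS -> is_lattice (sublat W).
Proof.
move=> AW; exists sublat_basis; split; first exact: sublat_basis_unit.
apply/seteqP; split => x.
  move=> [z ->]; rewrite -(eqmxP AW) => /redp_sub_pivotP[y ->].
  by exists y; rewrite mul_sublat_basis.
move=> [y ->]; rewrite mul_sublat_basis; apply/sublat_divp_ptP.
by rewrite -(eqmxP AW); apply/redp_sub_pivotP; exists y.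
Qed.

End PivotBasis.

Lemma sublat_quot_dim k (A : 'M['F_p]_(k, n)) W : (A == W)%MS -> row_free A ->
  quot_dim p (sublat W) L k.
Proof.
move=> AW A_free; exists (fun i => divp_pt (lift_Fp (row i A))); split.
  by move=> i; apply/sublat_divp_ptP; rewrite redp_lift_Fp -(eqmxP AW) row_sub.
move=> _ [z -> zW].
have lat_diffP (c : 'I_k -> nat) :
    L (divp_pt z - \sum_i (c i)%:R *: divp_pt (lift_Fp (row i A))) <->
    redp z = \sum_i (c i)%:R *: row i A.
  under eq_bigr do rewrite scaler_nat -raddfMn.
  rewrite -raddf_sum -raddfB lattice_divp_ptP raddfB raddf_sum /=.
  under eq_bigr do rewrite raddfMn /= redp_lift_Fp -scaler_nat.
  by split=> [/eqP|->]; rewrite ?subrr // subr_eq0 => /eqP.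
rewrite -(eqmxP AW) in zW; case/submxP: zW => u ez.
pose a : {ffun 'I_k -> 'I_p} := [ffun i => cast_ord (Fp_cast p_pr) (u 0 i)].
have av i : ((a i : nat)%:R : 'F_p) = u 0 i by rewrite ffunE /= natr_Zp.
exists a; split.
  by apply/lat_diffP; rewrite ez mulmx_sum_row; apply: eq_bigr => i _; rewrite av.
move=> a' /lat_diffP e'; apply/ffunP => i; apply/val_inj => /=.
have : \row_i ((a' i : nat)%:R : 'F_p) = u.
  apply: (row_free_inj A_free); rewrite /= -ez e' mulmx_sum_row.
  by apply: eq_bigr => i' _; rewrite mxE.
move/rowP/(_ i); rewrite mxE ffunE /= => <-.
by rewrite val_Fp_nat // modn_small.
Qed.

Lemma sublat_subsetP W1 W2 : (sublat W1 `<=` sublat W2)%classic <-> (W1 <= W2)%MS.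
Proof.
split=> [sub12|W12 _ [z -> zW1]]; last by exists z => //; apply: submx_trans W12.
apply/row_subP => i.
have /sub12 /sublat_divp_ptP : sublat W1 (divp_pt (lift_Fp (row i W1))).
  by apply/sublat_divp_ptP; rewrite redp_lift_Fp row_sub.
by rewrite redp_lift_Fp.
Qed.

Lemma sublat_properP W1 W2 : (sublat W1 `<` sublat W2)%classic <-> (W1 < W2)%MS.
Proof.
rewrite ltmxE; split=> [[/sublat_subsetP -> /sublat_subsetP/negP //]|].
by case/andP=> /sublat_subsetP W12 /negP W21; split=> // /sublat_subsetP.
Qed.

Lemma sublat0 : sublat 0 = L.
Proof.
apply/seteqP; split=> [_ [z ->]|x /latticeP[z -> z0]].
  by rewrite submx0 => /eqP z0; apply/lattice_divp_ptP.
by exists z; rewrite ?z0 ?sub0mx.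
Qed.

Lemma sublat1 : sublat 1%:M = lat_div p L.
Proof.
apply/seteqP; split=> [x [z -> _]|x /lat_divP[z ->]]; first by apply/lat_divP; exists z.
by apply/sublat_divp_ptP; exact: submx1.
Qed.

Lemma sublat_Lk k W : (1 <= k <= n - 1)%N -> W \in subspaces_through 0 k ->
  Lk p k L (sublat W).
Proof.
move=> /andP[k_gt0 le_kn]; rewrite inE => /and3P[_ /eqP rW _].
have [A [f [f_inj AW A_piv]]] := pivot_basis rW.
have A_free : row_free A by rewrite /row_free (eqmx_rank AW) rW.
split.
- exact: (sublat_is_lattice f_inj A_piv AW).
- rewrite -sublat0; apply/sublat_properP; rewrite lt0mx.
  by apply: contraTneq k_gt0 => W0; rewrite -rW W0 mxrank0.
- rewrite -sublat1; apply/sublat_properP; rewrite ltmx1 /row_full rW.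
  by apply/eqP => ekn; move: le_kn k_gt0; rewrite ekn; lia.
- exact: sublat_quot_dim AW A_free.
Qed.

Lemma sublat_inj k : {in subspaces_through 0 k &, injective sublat}.
Proof.
move=> W1 W2; rewrite !inE => /and3P[/eqP gW1 _ _] /and3P[/eqP gW2 _ _] e12.
rewrite -gW1 -gW2; apply/genmxP/andP.
by split; apply/sublat_subsetP; rewrite e12.
Qed.

Section RedSet.
Variables (BM : 'M[R]_n).
Local Notation M := (lattice_of BM).
Hypotheses (LM : (L `<=` M)%classic) (M_div : (M `<=` lat_div p L)%classic).

Definition redset : {set 'rV['F_p]_n} :=
  [set v | `[< exists2 z, M (divp_pt z) & redp z = v >]]%SET.

Lemma mem_redset v : v \in redset <-> exists2 z, M (divp_pt z) & redp z = v.
Proof. by rewrite inE asboolE. Qed.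

Lemma redset_divp_pt z : M (divp_pt z) -> redp z \in redset.
Proof. by move=> Mz; apply/mem_redset; exists z. Qed.

Lemma submx_redset v : (v <= set_mx redset)%MS = (v \in redset).
Proof.
apply: submx_set_mx => [|_ _ /mem_redset[z1 Mz1 <-] /mem_redset[z2 Mz2 <-]|c _ /mem_redset[z Mz <-]].
- by rewrite -(raddf0 redp); apply: redset_divp_pt; rewrite raddf0; exact: lattice_of0.
- by rewrite -raddfD; apply: redset_divp_pt; rewrite raddfD; exact: lattice_ofD.
- rewrite -[c]natr_Zp scaler_nat -raddfMn; apply: redset_divp_pt.
  by rewrite raddfMn; exact: lattice_ofMn.
Qed.

Lemma sublat_redset : M = sublat <<set_mx redset>>%MS.
Proof.
apply/seteqP; split=> [x Mx|_ [z ->]]; rewrite ?genmxE ?submx_redset.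
  have /lat_divP[z ez] := M_div Mx; subst x.
  by apply/sublat_divp_ptP; rewrite genmxE submx_redset; exact: redset_divp_pt.
move=> /mem_redset[z' Mz' ez'].
have -> : divp_pt z = divp_pt z' + divp_pt (z - z') by rewrite raddfB addrC subrK.
by apply: lattice_ofD Mz' (LM _); apply/lattice_divp_ptP; rewrite raddfB /= ez' subrr.
Qed.

Lemma card_redset k : quot_dim p M L k -> #|redset| = (p ^ k)%N.
Proof.
move=> [x [Mx x_uniq]].
have [zx ex] : exists zx : 'I_k -> 'rV[int]_n, forall i, x i = divp_pt (zx i).
  by apply: (fin_all_exists (P := fun i z => x i = divp_pt z)) => i; apply/lat_divP/M_div/Mx.
pose g (a : {ffun 'I_k -> 'I_p}) := \sum_i zx i *+ a i.
have g_sum a : divp_pt (g a) = \sum_i (a i : nat)%:R *: x i.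
  by rewrite raddf_sum; apply: eq_bigr => i _; rewrite raddfMn ex scaler_nat.
have M_g a : M (divp_pt (g a)).
  by rewrite g_sum; apply: lattice_of_sum => i; rewrite scaler_nat; exact: lattice_ofMn.
have L_diff a z : L (divp_pt z - divp_pt (g a)) <-> redp z = redp (g a).
  rewrite -raddfB lattice_divp_ptP raddfB /=.
  by split=> [/eqP|->]; rewrite ?subrr // subr_eq0 => /eqP.
have -> : redset = [set redp (g a) | a in [set: {ffun 'I_k -> 'I_p}]]%SET.
  apply/setP => v; apply/idP/imsetP => [/mem_redset[z Mz <-]|[a _ ->]].
    by have [a [Ea _]] := x_uniq _ Mz; exists a => //; apply/L_diff; rewrite g_sum.
  exact: redset_divp_pt.
rewrite card_imset ?cardsT ?card_ffun ?card_ord // => a a' e.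
have [a0 [_ a0_uniq]] := x_uniq _ (M_g a).
rewrite -(a0_uniq a) -?g_sum ?subrr; last exact: lattice_of0.
by apply: a0_uniq; rewrite -g_sum; apply/L_diff.
Qed.

End RedSet.

Lemma Lk_sublat k M : Lk p k L M ->
  exists2 W, W \in subspaces_through 0 k & M = sublat W.
Proof.
move=> [[BM [_ ->]] [LM _] [M_div _] M_quot].
exists <<set_mx (redset BM)>>%MS; last exact: sublat_redset.
rewrite inE genmx_id eqxx sub0mx mxrank_gen andbT /=.
have e : [set v | (v <= set_mx (redset BM))%MS]%SET = redset BM.
  by apply/setP => v; rewrite inE submx_redset.
have := card_submx (set_mx (redset BM)); rewrite card_Fp // => card_W.
have : (p ^ \rank (set_mx (redset BM)) = p ^ k)%N.
  by rewrite -card_W -(card_redset M_div M_quot) e.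
by move/eqP; rewrite eqn_exp2l ?prime_gt1.
Qed.

Lemma Lk_sublatE k : (1 <= k <= n - 1)%N ->
  Lk p k L = (sublat @` [set` subspaces_through 0 k])%classic.
Proof.
move=> k_range; apply/seteqP; split => [M /Lk_sublat[W WS ->]|_ [W WS <-]].
  by exists W.
exact: sublat_Lk.
Qed.

Lemma card_sublat_containing k x : (1 <= k <= n)%N -> lat_div p L x ->
  #|[set W in subspaces_through 0 k | `[< sublat W x >]]| =
  if `[< L x >] then gauss_binom p k n else gauss_binom p k.-1 n.-1.
Proof.
move=> k_range /lat_divP[z ->].
have -> : `[< L (divp_pt z) >] = (redp z == 0).
  by apply/asboolP/eqP => /lattice_divp_ptP.
have := card_subspaces_sub (redp z) k_range; rewrite (card_Fp p_pr) => <-.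
congr #|pred_of_set _|.
by apply/setP => W; rewrite !inE; congr (_ && _); apply/asboolP/idP => /sublat_divp_ptP.
Qed.

Lemma fsbig_Lk k (V : nmodType) (F : set 'rV[R]_n -> V) : (1 <= k <= n - 1)%N ->
  \sum_(M \in Lk p k L) F M = \sum_(W in subspaces_through 0 k) F (sublat W).
Proof.
move=> k_range; rewrite Lk_sublatE // fsbig_image; last first.
  by move=> W1 W2; rewrite !in_setE /=; apply: sublat_inj.
rewrite -(@bigfs _ _ _ _ (enum (subspaces_through 0 k))) ?enum_uniq //; last first.
  by move=> W WS; rewrite mem_enum => /negP; case; exact: WS.
by rewrite big_enum_cond; apply: eq_bigl => W; rewrite andbb.
Qed.

End DivpLattice.

Lemma poly_eq_nat (R : numDomainType) (P Q : {poly R}) :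
  (forall t : nat, P.[t%:R] = Q.[t%:R]) -> P = Q.
Proof.
move=> PQ; apply/eqP; rewrite -subr_eq0; apply/negPn/negP => PQ_neq0.
set rs := [seq (t%:R : R) | t <- iota 0 (size (P - Q))].
have rs_roots : all (root (P - Q)) rs.
  by apply/allP => x /mapP[t _ ->]; rewrite rootE hornerD hornerN PQ subrr.
have rs_uniq : uniq rs.
  by rewrite map_inj_uniq ?iota_uniq // => a b /eqP; rewrite eqr_nat => /eqP.
by have := max_poly_roots PQ_neq0 rs_roots rs_uniq; rewrite size_map size_iota ltnn.
Qed.

Lemma coef_comp_polyZX (R : comNzRingType) (E : {poly R}) (c : R) l :
  (E \Po (c *: 'X))`_l = c ^+ l * E`_l.
Proof.
rewrite coef_comp_poly; under eq_bigr do rewrite exprZn coefZ coefXn.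
have [lt_lE|le_El] := ltnP l (size E); last first.
  rewrite big1 ?nth_default ?mulr0 // => i _.
  by rewrite gtn_eqF ?mulr0 // (leq_trans (ltn_ord i) le_El).
rewrite (bigD1 (Ordinal lt_lE)) //= eqxx mulr1 big1 ?addr0 1?mulrC // => i ne_il.
suff -> : (l == i) = false by rewrite !mulr0.
by apply: contraNF ne_il => /eqP eli; apply/eqP/val_inj; rewrite /= eli.
Qed.

Lemma natr_sum_if (R : comNzRingType) (T : Type) (b : pred T) (s : seq T) (a c : nat) :
  ((\sum_(x <- s) (if b x then a else c))%N%:R : R) =
    c%:R * (size s)%:R + (a%:R - c%:R) * (count b s)%:R.
Proof.
elim: s => [|x s IHs]; first by rewrite big_nil /= !mulr0 addr0.
by rewrite big_cons /= natrD IHs !natrD; case: (b x) => /=; ring.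
Qed.

Section Ehrhart.
Variables (R : realType) (n : nat) (Q : set 'rV[R]_n).

Lemma ehrhart_count (N N' : set 'rV[R]_n) f t (s : seq 'rV[R]_n) :
  is_ehrhart N Q f -> (N `<=` N')%classic -> uniq s ->
  (forall x, x \in s <-> (dilate t Q `&` N')%classic x) ->
  f.[t%:R] = (count (fun x => `[< N x >]) s)%:R.
Proof.
move=> /(_ t) [s' [s'_uniq s'E ->]] NN' s_uniq sE; congr (_%:R).
rewrite -size_filter; apply: perm_size; apply: uniq_perm => //; first exact: filter_uniq.
move=> x; rewrite mem_filter; apply/idP/idP.
  by move=> /s'E[tQx Nx]; rewrite asboolT //; apply/sE; split => //; exact: NN'.
by move=> /andP[/asboolP Nx /sE[tQx _]]; apply/s'E.
Qed.

Lemma is_ehrhart_lat_div (L : set 'rV[R]_n) E p : (0 < p)%N ->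
  is_ehrhart L Q E -> is_ehrhart (lat_div p L) Q (E \Po (p%:R *: 'X)).
Proof.
move=> p_gt0 EL t; have [s [s_uniq sE Ept]] := EL (p * t)%N.
have p_neq0 : (p%:R : R) != 0 by rewrite pnatr_eq0 -lt0n.
exists (map (fun x => p%:R^-1 *: x) s); split.
- by rewrite map_inj_uniq // => x y; apply: scalerI; rewrite invr_eq0.
- move=> x; split=> [/mapP[y /sE[[q Qq <-] Ly] ->]|[[q Qq <-] Lx]].
    split; first by exists q; rewrite // scalerA natrM mulrA mulVf ?mul1r.
    by rewrite /lat_div /= scalerA divff // scale1r.
  apply/mapP; exists (p%:R *: (t%:R *: q)); last by rewrite (scalerA p%:R^-1) mulVf ?scale1r.
  by apply/sE; split => //; exists q; rewrite // scalerA natrM.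
- by rewrite horner_comp hornerZ hornerX -natrM Ept size_map.
Qed.

Lemma ehrhart_sum_cover (I : finType) (S : {set I}) (L L' : set 'rV[R]_n)
    (M : I -> set 'rV[R]_n) (E E' : {poly R}) (EM : I -> {poly R}) (a c : nat) :
  (L `<=` L')%classic -> (forall i, i \in S -> (M i `<=` L')%classic) ->
  is_ehrhart L Q E -> is_ehrhart L' Q E' ->
  (forall i, i \in S -> is_ehrhart (M i) Q (EM i)) ->
  (forall x, L' x -> #|[set i in S | `[< M i x >]]| = if `[< L x >] then a else c) ->
  \sum_(i in S) EM i = c%:R *: E' + (a%:R - c%:R) *: E.
Proof.
move=> LL' ML' EL EL' EM_M cover; apply: poly_eq_nat => t.
have [s [s_uniq sE E't]] := EL' t.
have sL' x : x \in s -> L' x by move=> /sE[].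
rewrite horner_sum hornerD !hornerZ E't (ehrhart_count EL LL' s_uniq sE).
rewrite (eq_bigr (fun i => (count (fun x => `[< M i x >]) s)%:R)); last first.
  by move=> i Si; exact: ehrhart_count (EM_M i Si) (ML' i Si) s_uniq sE.
rewrite -natr_sum -natr_sum_if; congr (_%:R).
under eq_bigr do rewrite -sum1_count big_mkcond /=.
rewrite exchange_big /= big_seq [RHS]big_seq; apply: eq_bigr => x xs.
rewrite -cover; last exact: sL'.
by rewrite -sum1dep_card big_mkcondr.
Qed.

End Ehrhart.

Local Open Scope classical_set_scope.
Local Open Scope ring_scope.

Theorem lemma3p1 (R : realType) (n : nat) (L : set 'rV[R]_n)
  (vs : seq 'rV[R]_n) (p k : nat) (E : {poly R})
  (EM : set 'rV[R]_n -> {poly R}) :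
  is_lattice L ->
  (forall v, v \in vs -> L v) ->
  \rank (\matrix_(i < size vs) (nth 0 vs i - nth 0 vs 0)) = n ->
  prime p -> (1 <= k <= n - 1)%N ->
  is_ehrhart L (conv vs) E ->
  (forall M, Lk p k L M -> is_ehrhart M (conv vs) (EM M)) ->
  \sum_(M \in Lk p k L) EM M =
    (gauss_binom p k.-1 n.-1)%:R *: (E \Po (p%:R *: 'X))
    + ((gauss_binom p k n)%:R - (gauss_binom p k.-1 n.-1)%:R) *: E
  /\ forall l : nat, (l <= n)%N ->
    (\sum_(M \in Lk p k L) EM M)`_l =
      ((gauss_binom p k n)%:R
        + (p ^ l - 1)%:R * (gauss_binom p k.-1 n.-1)%:R) * E`_l.
Proof.
move=> [B0 [B0_unit ->]] _ _ p_pr k_range EL EM_Lk.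
have k_le_n : (1 <= k <= n)%N.
  by case/andP: k_range => -> /leq_trans; apply; exact: leq_subr.
have sumE : \sum_(M \in Lk p k (lattice_of B0)) EM M =
    (gauss_binom p k.-1 n.-1)%:R *: (E \Po (p%:R *: 'X)) +
    ((gauss_binom p k n)%:R - (gauss_binom p k.-1 n.-1)%:R) *: E.
  rewrite (fsbig_Lk p_pr B0_unit) //.
  apply: (ehrhart_sum_cover (L := lattice_of B0) (L' := lat_div p (lattice_of B0))
    (M := sublat B0) (EM := fun W => EM (sublat B0 W))) => //.
  - by apply: lattice_sub_lat_div.
  - by move=> W _; apply: sublat_sub_lat_div.
  - exact: is_ehrhart_lat_div (prime_gt0 p_pr) EL.
  - by move=> W WS; apply: EM_Lk; apply: sublat_Lk.
  - by move=> x; apply: card_sublat_containing.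
split=> // l _; rewrite sumE coefD !coefZ coef_comp_polyZX natrB ?expn_gt0 ?prime_gt0 //.
by rewrite natrX; ring.
Qed.
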